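(* Fix $\delta>0$ and privacy levels $\epsilon_1,\dots,\epsilon_n>0$. Let $\mathcal{P}=\{(s,c,q): s\in(0,2),\ c>0,\ q\in(|s-1|,1)\}$ and $$J(\{s_i,c_i,q_i\}_{i=1}^n)=\frac{2}{n^2}\sum_{i=1}^n\frac{s_i^2c_i^2}{1-q_i^2}.$$ Then the infimum of $J$ over all $\{(s_i,c_i,q_i)\}_{i=1}^n\in\mathcal{P}^n$ satisfying the privacy constraints $\epsilon_i=\delta\frac{q_i}{c_i(q_i-|s_i-1|)}$ for all $i$ (equivalently $c_i=\delta\frac{q_i}{\epsilon_i(q_i-|s_i-1|)}$) equals $$J^*=\frac{2\delta^2}{n^2}\sum_{i=1}^n\frac{1}{\epsilon_i^2}.$$ This infimum is not attained on the constraint set, and it is approached by taking $s_i=1$, $c_i=\delta q_i/(\epsilon_i(q_i-|s_i-1|))$, and $q_i\to0$ for all $i$.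
   Context: $J$ equals the variance of the consensus point $\theta_\infty$ of the Laplacian differentially private consensus algorithm $\theta(k+1)=\theta(k)-hLx(k)+S\eta(k)$, $x(k)=\theta(k)+\eta(k)$, $S=\mathrm{diag}(s_i)$, $\eta_i(k)\sim\mathrm{Lap}(c_iq_i^k)$ independent, and $\epsilon_i=\delta q_i/(c_i(q_i-|s_i-1|))$ is the differential privacy level of agent $i$ for adjacency bound $\delta$. *)

(* the statement is purely order-algebraic over an ordered field. *)
From HB Require Import structures.
From mathcomp Require Import all_boot all_order all_algebra.
Set Implicit Arguments. Unset Strict Implicit. Unset Printing Implicit Defensive.
Import Order.TTheory GRing.Theory Num.Theory.
Local Open Scope ring_scope.

Definition inP (R : realFieldType) (s c q : R) : Prop :=
  [/\ 0 < s < 2, 0 < c & `|s - 1| < q < 1].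

Definition dp_level (R : realFieldType) (delta s c q : R) : R :=
  delta * q / (c * (q - `|s - 1|)).

Definition Jcost (R : realFieldType) (n : nat) (s c q : 'I_n -> R) : R :=
  2 / (n%:R ^+ 2) * \sum_(i < n) (s i ^+ 2 * c i ^+ 2 / (1 - q i ^+ 2)).

Definition Jstar (R : realFieldType) (n : nat) (delta : R) (eps : 'I_n -> R) : R :=
  2 * delta ^+ 2 / (n%:R ^+ 2) * \sum_(i < n) (eps i ^+ 2)^-1.

Definition feasible (R : realFieldType) (n : nat) (delta : R) (eps : 'I_n -> R)
  (s c q : 'I_n -> R) : Prop :=
  forall i, inP (s i) (c i) (q i) /\ eps i = dp_level delta (s i) (c i) (q i).

(* Write a := |s - 1|.  The privacy constraint fixes c = delta q / (eps (q - a)), so an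
   agent's cost is (delta/eps)^2 * (s q)^2 / ((q - a)^2 (1 - q^2)).  Since s >= 1 - a and
   (1 - a) q >= q - a, we get s q >= q - a > 0, and 1 - q^2 < 1 makes the factor
   strictly larger than 1: J* is a strict lower bound.  For s = 1 (so a = 0) the factor
   is 1/(1 - q^2) = 1 + O(q^2), whence the cost tends to J* as all q_i tend to 0. *)
From HB Require Import structures.
From mathcomp Require Import all_boot all_order all_algebra.
From mathcomp Require Import ring lra.
Set Implicit Arguments. Unset Strict Implicit. Unset Printing Implicit Defensive.
Import Order.TTheory GRing.Theory Num.Theory.
Local Open Scope ring_scope.

Section PrivateConsensusCost.
Variable R : realFieldType.

Lemma privacy_gain_gt1 {s a q : R} :
  0 <= a -> a < q -> q < 1 -> 1 - a <= s ->
  (q - a) ^+ 2 * (1 - q ^+ 2) < (s * q) ^+ 2.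
Proof.
move=> a_ge0 aq q_lt1 s_ge.
have qa_gt0 : 0 < q - a by lra.
have qa_le_sq : q - a <= s * q by nra.
have drop : (q - a) ^+ 2 * (1 - q ^+ 2) < (q - a) ^+ 2.
  by rewrite gtr_pMr ?exprn_gt0 //; nra.
by apply: (lt_le_trans drop); rewrite lerXn2r ?nnegrE; lra.
Qed.

Lemma agent_cost_gt (delta e s c q : R) :
  0 < delta -> 0 < e -> inP s c q -> e = dp_level delta s c q ->
  delta ^+ 2 / e ^+ 2 < s ^+ 2 * c ^+ 2 / (1 - q ^+ 2).
Proof.
move=> delta_gt0 e_gt0 [/andP[s_gt0 _] c_gt0 /andP[aq q_lt1]] ->.
set a := `|s - 1| in aq *.
have a_ge0 : 0 <= a by rewrite normr_ge0.
have s_ge : 1 - a <= s.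
  have : - (s - 1) <= a by rewrite /a -normrN ler_norm.
  lra.
have qa_gt0 : 0 < q - a by lra.
have q_gt0 : 0 < q by lra.
have onesq_gt0 : 0 < 1 - q ^+ 2 by nra.
have -> : delta ^+ 2 / (delta * q / (c * (q - a))) ^+ 2
          = c ^+ 2 * (q - a) ^+ 2 / q ^+ 2.
  by field; rewrite !gt_eqF.
rewrite ltr_pdivrMr ?exprn_gt0 // [_ / _ * _]mulrAC ltr_pdivlMr //.
have gain := privacy_gain_gt1 a_ge0 aq q_lt1 s_ge.
have c2_gt0 : 0 < c ^+ 2 by rewrite exprn_gt0.
nra.
Qed.

Lemma ratio_sq_le (q d : R) :
  0 <= q -> q <= d -> d <= 2^-1 -> 0 <= q ^+ 2 / (1 - q ^+ 2) <= d.
Proof.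
move=> q_ge0 qd d_le.
have onesq_gt0 : 0 < 1 - q ^+ 2 by nra.
by rewrite divr_ge0 ?ler_pdivrMr /=; nra.
Qed.

Variables (n : nat) (delta : R) (eps : 'I_n -> R).
Hypotheses (delta_gt0 : 0 < delta) (eps_gt0 : forall i, 0 < eps i).

Let w i := delta ^+ 2 / eps i ^+ 2.

Let w_gt0 i : 0 < w i.
Proof. by rewrite divr_gt0 ?exprn_gt0. Qed.

Lemma JstarE : Jstar delta eps = 2 / n%:R ^+ 2 * \sum_(i < n) w i.
Proof. by rewrite /Jstar -mulr_sumr; ring. Qed.

Lemma Jstar_ge0 : 0 <= Jstar delta eps.
Proof.
rewrite JstarE mulr_ge0 ?divr_ge0 ?exprn_ge0 //.
by apply: sumr_ge0 => i _; exact: ltW.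
Qed.

Lemma Jstar_lt_Jcost (s c q : 'I_n -> R) :
  (0 < n)%N -> feasible delta eps s c q -> Jstar delta eps < Jcost s c q.
Proof.
move=> n_gt0 feas; rewrite JstarE /Jcost ltr_pM2l ?divr_gt0 ?exprn_gt0 ?ltr0n //.
apply: ltr_sum => [|i _]; first by apply/hasP; exists (Ordinal n_gt0).
by have [Pi eps_i] := feas i; exact: agent_cost_gt delta_gt0 (eps_gt0 i) Pi eps_i.
Qed.

(* The c_i forced by the privacy constraint when s_i = 1, kept unsimplified
   ([|1 - 1|] rather than 0) so that it matches the constraint syntactically. *)
Definition unit_gain_c (q : 'I_n -> R) (i : 'I_n) : R :=
  delta * q i / (eps i * (q i - `|1 - 1|)).

Lemma feasible_unit_gain (q : 'I_n -> R) :
  (forall i, 0 < q i < 1) -> feasible delta eps (fun=> 1) (unit_gain_c q) q.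
Proof.
move=> q01 i; have /andP[q_gt0 q_lt1] := q01 i.
rewrite /inP /dp_level /unit_gain_c subrr normr0 subr0; split; first split.
- by apply/andP; split; lra.
- by rewrite divr_gt0 ?mulr_gt0.
- by rewrite q_gt0 q_lt1.
- by field; rewrite !gt_eqF.
Qed.

Lemma Jcost_unit_gainE (q : 'I_n -> R) : (forall i, 0 < q i < 1) ->
  Jcost (fun=> 1) (unit_gain_c q) q
  = Jstar delta eps + 2 / n%:R ^+ 2 * \sum_(i < n) w i * (q i ^+ 2 / (1 - q i ^+ 2)).
Proof.
move=> q01; rewrite JstarE -mulrDr -big_split /Jcost; congr (_ * _).
apply: eq_bigr => i _; have /andP[q_gt0 q_lt1] := q01 i.
have onesq_neq0 : 1 - q i ^+ 2 != 0 by apply/lt0r_neq0; nra.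
rewrite /w /unit_gain_c /= subrr normr0 subr0.
by field; rewrite onesq_neq0 !gt_eqF.
Qed.

Lemma Jcost_unit_gain_near {q : 'I_n -> R} {d : R} :
  d <= 2^-1 -> (forall i, 0 < q i < d) ->
  `|Jcost (fun=> 1) (unit_gain_c q) q - Jstar delta eps| <= d * Jstar delta eps.
Proof.
move=> d_le qd.
have q01 i : 0 < q i < 1 by have /andP[? ?] := qd i; apply/andP; split; lra.
have ratio i : 0 <= q i ^+ 2 / (1 - q i ^+ 2) <= d.
  by have /andP[? ?] := qd i; apply: ratio_sq_le; lra.
rewrite Jcost_unit_gainE // addrC addKr JstarE.
have c_ge0 : 0 <= 2 / n%:R ^+ 2 :> R by rewrite divr_ge0 ?exprn_ge0.
have err_ge0 : 0 <= \sum_(i < n) w i * (q i ^+ 2 / (1 - q i ^+ 2)).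
  by apply: sumr_ge0 => i _; rewrite mulr_ge0 ?(ltW (w_gt0 i)) //; case/andP: (ratio i).
rewrite ger0_norm; last exact: mulr_ge0.
rewrite mulrCA ler_wpM2l // mulr_sumr.
apply: ler_sum => i _; rewrite [d * _]mulrC ler_pM2l //; by case/andP: (ratio i).
Qed.

Lemma Jcost_unit_gain_cvg (e : R) : 0 < e ->
  exists2 d : R, 0 < d <= 2^-1 & forall q : 'I_n -> R, (forall i, 0 < q i < d) ->
    `|Jcost (fun=> 1) (unit_gain_c q) q - Jstar delta eps| < e.
Proof.
move=> e_gt0; set K := Jstar delta eps.
have K_ge0 : 0 <= K := Jstar_ge0.
set d := Num.min 2^-1 (e / (K + 1)).
have d_gt0 : 0 < d by rewrite lt_min invr_gt0 ltr0n divr_gt0 //; lra.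
have d_le : d <= 2^-1 by rewrite ge_min lexx.
exists d => [|q qd]; first by rewrite d_gt0 d_le.
have near := Jcost_unit_gain_near d_le qd; rewrite -/K in near.
have dK1 : d * (K + 1) <= e by rewrite -ler_pdivlMr ?ge_min ?lexx ?orbT //; lra.
lra.
Qed.

End PrivateConsensusCost.

Theorem mainTheorem7 (R : realFieldType) (n : nat) (delta : R) (eps : 'I_n -> R) :
  (0 < n)%N -> 0 < delta -> (forall i, 0 < eps i) ->
  (forall s c q : 'I_n -> R, feasible delta eps s c q -> Jstar delta eps < Jcost s c q)
  /\ (forall e : R, 0 < e -> exists s c q : 'I_n -> R,
        feasible delta eps s c q /\ Jcost s c q < Jstar delta eps + e)
  /\ (forall q : 'I_n -> R, (forall i, 0 < q i < 1) ->
        feasible delta eps (fun _ => 1)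
          (fun i => delta * q i / (eps i * (q i - `|1 - 1|))) q)
  /\ (forall e : R, 0 < e -> exists d : R, 0 < d /\
        forall q : 'I_n -> R, (forall i, 0 < q i < d) ->
          `| Jcost (fun _ => 1) (fun i => delta * q i / (eps i * (q i - `|1 - 1|))) q
             - Jstar delta eps | < e).
Proof.
move=> n_gt0 delta_gt0 eps_gt0.
split; [by move=> s c q; exact: Jstar_lt_Jcost|split; [|split]].
- move=> e /(Jcost_unit_gain_cvg delta_gt0 eps_gt0)[d /andP[d_gt0 d_le] near].
  have [half_gt0 half_lt_d half_lt1] : [/\ 0 < d / 2, d / 2 < d & d / 2 < 1].
    by split; lra.
  exists (fun=> 1), (unit_gain_c delta eps (fun=> d / 2)), (fun=> d / 2); split.
    by apply: feasible_unit_gain => // i; rewrite half_gt0 half_lt1.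
  by rewrite -ltrBlDl; apply/ltr_normlW/near => i; rewrite half_gt0 half_lt_d.
- exact: feasible_unit_gain.
- move=> e /(Jcost_unit_gain_cvg delta_gt0 eps_gt0)[d /andP[d_gt0 _] near].
  by exists d.
Qed.
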